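(* In a node-weighted MFQST with Steiner point cost $c>0$, every edge $e$ satisfies $|e|\le\sqrt{2c/f(e)}$, where $f(e)$ is the flow on $e$.
   Context: Let $Z=\{z_1,\dots,z_n\}\subset\mathbb{R}^2$ ($n\ge 1$) be a set of sources and $z_{BS}\in\mathbb{R}^2\setminus Z$ a sink; each source has supply $1$. A flow-dependent quadratic Steiner tree (FQST) consists of a finite set $S\subset\mathbb{R}^2$ of Steiner points and a tree $T$ with vertex set $Z\cup S\cup\{z_{BS}\}$ whose edges are directed towards $z_{BS}$. Every node other than the sink has exactly one out-edge, and the sink has none. Each edge $e$ carries a positive flow $f(e)$ such that: - at each source, the flow on its out-edge minus the total flow on its in-edges equals $1$; - at each Steiner point, the out-flow equals the total in-flow; - the sink receives total flow $n$. The cost is $L(T)=\sum_{e\in E(T)} f(e)|e|^2$. For a fixed $c>0$, a node-weighted MFQST is an FQST minimising $L_c(T)=L(T)+c|S|$ over all FQSTs (any finite $S$, any topology). *)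

(* points of the plane are pairs over a real closed field R
   (the statement is proved for every rcfType, in particular covers R^2). *)
From HB Require Import structures.
From mathcomp Require Import all_boot all_order all_algebra.
Set Implicit Arguments. Unset Strict Implicit. Unset Printing Implicit Defensive.
Import Order.TTheory GRing.Theory Num.Theory.
Local Open Scope ring_scope.

Definition point (R : rcfType) := (R * R)%type.

Definition sqdist (R : rcfType) (p q : point R) : R :=
  (p.1 - q.1) ^+ 2 + (p.2 - q.2) ^+ 2.
Definition dist (R : rcfType) (p q : point R) : R := Num.sqrt (sqdist p q).

(* Non-sink nodes of a tree with n sources and m Steiner points:
   inl i = source z_i, inr j = Steiner point s_j.
   All nodes: option of these, None = the sink z_BS. *)
Definition vtx (n m : nat) := ('I_n + 'I_m)%type.

(* Each non-sink node v has exactly one out-edge, to [par v]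
   (None = sink); the sink has no out-edge.  [flow v] is the flow on the
   out-edge of v. *)
Record FQST (R : rcfType) (n : nat) (z : 'I_n -> point R) (zBS : point R) := {
  nst : nat;
  spt : 'I_nst -> point R;
  par : vtx n nst -> option (vtx n nst);
  flow : vtx n nst -> R;
  spt_inj : injective spt;
  spt_notZ : forall j i, spt j != z i;
  spt_notBS : forall j, spt j != zBS;
  (* edges directed towards the sink: T is a tree rooted at the sink *)
  par_tree : forall v, exists k, iter k (obind par) (Some v) = None;
  flow_pos : forall v, 0 < flow v;
  flow_src : forall i : 'I_n,
    flow (inl i) - \sum_(u : vtx n nst | par u == Some (inl i)) flow u = 1;
  flow_stp : forall j : 'I_nst,
    flow (inr j) = \sum_(u : vtx n nst | par u == Some (inr j)) flow u;
  flow_sink : \sum_(u : vtx n nst | par u == None) flow u = n%:R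
}.

Arguments nst {R n z zBS} _.
Arguments spt {R n z zBS} _ _.
Arguments par {R n z zBS} _ _.
Arguments flow {R n z zBS} _ _.

Section FQSTdefs.
Context {R : rcfType} {n : nat} {z : 'I_n -> point R} {zBS : point R}.

Definition npos (T : FQST z zBS) (v : option (vtx n (nst T))) : point R :=
  match v with
  | None => zBS
  | Some (inl i) => z i
  | Some (inr j) => spt T j
  end.
Arguments npos : clear implicits.
Arguments npos T v.

Definition costL (T : FQST z zBS) : R :=
  \sum_(v : vtx n (nst T)) flow T v * sqdist (npos T (Some v)) (npos T (par T v)).

Definition costLc (c : R) (T : FQST z zBS) : R := costL T + c * (nst T)%:R.

Definition isMFQST (c : R) (T : FQST z zBS) : Prop :=
  forall T' : FQST z zBS, costLc c T <= costLc c T'.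
End FQSTdefs.
Arguments npos {R n z zBS} T v.
Arguments costL {R n z zBS} T.
Arguments costLc {R n z zBS} c T.
Arguments isMFQST {R n z zBS} c T.

From HB Require Import structures.
From mathcomp Require Import all_boot all_order all_algebra.
From mathcomp Require Import ring lra.
Import Order.TTheory GRing.Theory Num.Theory.
Local Open Scope ring_scope.
Set Implicit Arguments. Unset Strict Implicit. Unset Printing Implicit Defensive.

(* Let e = (v, u) be an edge with flow f and squared length D, and suppose
   f * D > 2c.  Subdivide e by a new Steiner point p lying on the segment
   at parameter t = 1/2 + s.  The topology stays a tree, flows are
   conserved (the new node simply forwards the flow f), so we get another
   FQST whose cost differs by  f (|vp|^2 + |pu|^2 - |vu|^2) + c
   = c - 2 t (1 - t) f D = c - (1/2 - 2 s^2) f D, which is negative for s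
   small enough, contradicting minimality.  Hence f |e|^2 <= 2c. *)

Section Subdivision.
Variables (R : rcfType) (n : nat) (z : 'I_n -> point R) (zBS : point R).
Variable T : FQST z zBS.
Local Notation m := (nst T).
(* The edge to subdivide is the out-edge of [v]; [p] is the new point. *)
Variable v : vtx n m.
Variable p : point R.
Hypothesis p_fresh : forall w : option (vtx n m), p != npos T w.

(* Old nodes keep their index; the new Steiner point gets the last index. *)
Definition old (u : vtx n m) : vtx n m.+1 :=
  match u with inl i => inl i | inr j => inr (lift ord_max j) end.
Definition new : vtx n m.+1 := inr ord_max.

Definition unold (w : vtx n m.+1) : option (vtx n m) :=
  match w with inl i => Some (inl i) | inr j => omap inr (unlift ord_max j) end.

Lemma oldK u : unold (old u) = Some u.
Proof. by case: u => //= j; rewrite liftK. Qed.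

Lemma unold_new : unold new = None.
Proof. by rewrite /= unlift_none. Qed.

Lemma unold_None w : unold w = None -> w = new.
Proof. by case: w => //= j; case: unliftP => //= ->. Qed.

Lemma unold_Some w u : unold w = Some u -> w = old u.
Proof. case: w => /= [i [<-]|j] //; case: unliftP => //= j' -> [<-] //. Qed.

Lemma old_inj : injective old.
Proof. exact: pcan_inj oldK. Qed.

Lemma old_neq_new u : (old u == new) = false.
Proof. by apply/negbTE/eqP => h; have := oldK u; rewrite h unold_new. Qed.

Lemma omap_old_eq (a b : option (vtx n m)) : (omap old a == omap old b) = (a == b).
Proof.
case: a => [x|]; case: b => [y|] //=.
by rewrite !(inj_eq (@Some_inj _)) (inj_eq old_inj).
Qed.

Lemma omap_old_new (a : option (vtx n m)) : (omap old a == Some new) = false.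
Proof. by case: a => //= x; rewrite (inj_eq (@Some_inj _)) old_neq_new. Qed.

Lemma sum_old_new (G : vtx n m.+1 -> R) :
  \sum_w G w = \sum_u G (old u) + G new.
Proof.
rewrite !big_sumType /= big_ord_recr /= addrA; congr (_ + _ + _).
apply: eq_bigr => j _; congr (G (inr _)); apply: val_inj.
by rewrite /= /bump leqNgt ltn_ord.
Qed.

(* The subdivided tree: v now points to the new node, which points to the
   former head of v's out-edge and carries the same flow as v. *)
Definition sub_spt (j : 'I_m.+1) : point R :=
  match unlift ord_max j with Some j' => spt T j' | None => p end.
Definition sub_par (w : vtx n m.+1) : option (vtx n m.+1) :=
  match unold w with
  | None => omap old (par T v)
  | Some u => if u == v then Some new else omap old (par T u)
  end.
Definition sub_flow (w : vtx n m.+1) : R :=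
  match unold w with None => flow T v | Some u => flow T u end.

Lemma sub_par_old u :
  sub_par (old u) = if u == v then Some new else omap old (par T u).
Proof. by rewrite /sub_par oldK. Qed.
Lemma sub_par_new : sub_par new = omap old (par T v).
Proof. by rewrite /sub_par unold_new. Qed.
Lemma sub_flow_old u : sub_flow (old u) = flow T u.
Proof. by rewrite /sub_flow oldK. Qed.
Lemma sub_flow_new : sub_flow new = flow T v.
Proof. by rewrite /sub_flow unold_new. Qed.

Lemma sub_spt_inj : injective sub_spt.
Proof.
move=> j1 j2; rewrite /sub_spt.
case: unliftP => [j1' ->|->]; case: unliftP => [j2' ->|->] //.
- by move/spt_inj ->.
- by move=> h; have := p_fresh (Some (inr j1')); rewrite /= h eqxx.
- by move=> h; have := p_fresh (Some (inr j2')); rewrite /= h eqxx.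
Qed.

Lemma sub_spt_notZ j i : sub_spt j != z i.
Proof.
rewrite /sub_spt; case: unliftP => [j' _|_]; first exact: spt_notZ.
exact: (p_fresh (Some (inl i))).
Qed.

Lemma sub_spt_notBS j : sub_spt j != zBS.
Proof.
rewrite /sub_spt; case: unliftP => [j' _|_]; first exact: spt_notBS.
exact: (p_fresh None).
Qed.

(* Every old path to the sink survives, lengthened by at most one step. *)
Lemma sub_par_reach k x : iter k (obind (par T)) x = None ->
  exists k', iter k' (obind sub_par) (omap old x) = None.
Proof.
elim: k x => [|k IH] [u|] //; try by exists 0%N.
rewrite iterSr /= => /IH [k' hk].
case: (eqVneq u v) => [e|huv].
- subst u; by exists k'.+2; rewrite !iterSr /= sub_par_old eqxx /= sub_par_new; exact: hk.
- by exists k'.+1; rewrite iterSr /= sub_par_old (negbTE huv); exact: hk.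
Qed.

Lemma sub_par_tree w : exists k, iter k (obind sub_par) (Some w) = None.
Proof.
case hw: (unold w) => [u|].
- rewrite (unold_Some hw); have [k hk] := par_tree u.
  exact: (sub_par_reach hk).
- rewrite (unold_None hw); have [[|k] hk] := par_tree v; first by [].
  rewrite iterSr /= in hk; have [k' hk'] := sub_par_reach hk.
  by exists k'.+1; rewrite iterSr /= sub_par_new.
Qed.

Lemma sub_flow_pos w : 0 < sub_flow w.
Proof. by rewrite /sub_flow; case: (unold w) => [u|]; apply: flow_pos. Qed.

(* Inflow at old nodes is unchanged: v's flow now arrives via the new node. *)
Lemma sub_inflow_old (y : option (vtx n m)) :
  \sum_(w | sub_par w == omap old y) sub_flow w = \sum_(u | par T u == y) flow T u.
Proof.
rewrite big_mkcond sum_old_new /= sub_par_new omap_old_eq sub_flow_new.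
rewrite [RHS]big_mkcond [RHS](bigD1 v) //= [in LHS](bigD1 v) //=.
rewrite sub_par_old eqxx [Some new == _]eq_sym omap_old_new add0r addrC.
congr (_ + _); apply: eq_bigr => u huv.
by rewrite sub_par_old (negbTE huv) omap_old_eq sub_flow_old.
Qed.

Lemma sub_inflow_new : \sum_(w | sub_par w == Some new) sub_flow w = flow T v.
Proof.
rewrite big_mkcond sum_old_new /= sub_par_new omap_old_new addr0.
rewrite (eq_bigr (fun u => if u == v then flow T u else 0)).
  by rewrite -big_mkcond big_pred1_eq.
move=> u _; rewrite sub_par_old sub_flow_old; case: (u == v); first by rewrite eqxx.
by rewrite omap_old_new.
Qed.

Lemma sub_flow_src i :
  sub_flow (inl i) - \sum_(w | sub_par w == Some (inl i)) sub_flow w = 1.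
Proof.
change (Some (inl i) : option (vtx n m.+1)) with (omap old (Some (inl i))).
by rewrite sub_inflow_old -[inl i]/(old (inl i)) sub_flow_old flow_src.
Qed.

Lemma sub_flow_stp j :
  sub_flow (inr j) = \sum_(w | sub_par w == Some (inr j)) sub_flow w.
Proof.
case: (unliftP ord_max j) => [j' ->|->]; last by rewrite sub_inflow_new sub_flow_new.
change (Some (inr (lift ord_max j')) : option (vtx n m.+1))
  with (omap old (Some (inr j'))).
by rewrite sub_inflow_old -[inr _]/(old (inr j')) sub_flow_old flow_stp.
Qed.

Lemma sub_flow_sink : \sum_(w | sub_par w == None) sub_flow w = n%:R.
Proof.
change (None : option (vtx n m.+1)) with (omap old (@None (vtx n m))).
by rewrite sub_inflow_old flow_sink.
Qed.

Definition subdivide : FQST z zBS :=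
  Build_FQST sub_spt_inj sub_spt_notZ sub_spt_notBS sub_par_tree sub_flow_pos
    sub_flow_src sub_flow_stp sub_flow_sink.

Lemma npos_old x : npos subdivide (omap old x) = npos T x.
Proof. by case: x => [[i|j]|] //=; rewrite /sub_spt liftK. Qed.

Lemma npos_new : npos subdivide (Some new) = p.
Proof. by rewrite /= /sub_spt unlift_none. Qed.

Lemma costL_subdivide : costL subdivide = costL T + flow T v *
  (sqdist (npos T (Some v)) p + sqdist p (npos T (par T v))
   - sqdist (npos T (Some v)) (npos T (par T v))).
Proof.
change (costL subdivide) with (\sum_(w : vtx n m.+1)
  sub_flow w * sqdist (npos subdivide (Some w)) (npos subdivide (sub_par w))).
rewrite sum_old_new sub_flow_new sub_par_new npos_new npos_old.
set G := fun u => flow T u * sqdist (npos T (Some u)) (npos T (par T u)).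
have -> : \sum_u sub_flow (old u) *
      sqdist (npos subdivide (Some (old u))) (npos subdivide (sub_par (old u)))
    = \sum_u (if u == v then flow T v * sqdist (npos T (Some v)) p else G u).
  apply: eq_bigr => u _; rewrite sub_par_old sub_flow_old.
  rewrite -[Some (old u)]/(omap old (Some u)) npos_old.
  by case: eqVneq => [->|_]; rewrite ?npos_new ?npos_old.
rewrite /costL -/G (bigD1 v) // eqxx [in RHS](bigD1 v) //.
rewrite (eq_bigr G); last by move=> u /negbTE ->.
rewrite /G; set S := \big[_/_]_(i | _) _; rewrite /=; ring.
Qed.

Lemma costLc_subdivide (c : R) : costLc c subdivide = costLc c T + flow T v *
  (sqdist (npos T (Some v)) p + sqdist p (npos T (par T v))
   - sqdist (npos T (Some v)) (npos T (par T v))) + c.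
Proof.
rewrite /costLc costL_subdivide -[nst subdivide]addn1 natrD; ring.
Qed.

End Subdivision.

Section SegmentPoints.
Variable R : rcfType.
Implicit Types (a b : point R) (t : R).

Definition seg a b t : point R :=
  (a.1 + t * (b.1 - a.1), a.2 + t * (b.2 - a.2)).

Lemma sqdist_ge0 a b : 0 <= sqdist a b.
Proof. by rewrite /sqdist addr_ge0 // sqr_ge0. Qed.

Lemma detour_seg a b t :
  sqdist a (seg a b t) + sqdist (seg a b t) b - sqdist a b
  = - (2 * t * (1 - t)) * sqdist a b.
Proof. rewrite /sqdist /seg /=; ring. Qed.

Lemma seg_inj a b : 0 < sqdist a b -> injective (seg a b).
Proof.
move=> hab t1 t2 [/addrI e1 /addrI e2].
have : (t1 - t2) ^+ 2 * sqdist a b = 0.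
  have -> : (t1 - t2) ^+ 2 * sqdist a b =
    (t1 * (b.1 - a.1) - t2 * (b.1 - a.1)) ^+ 2 +
    (t1 * (b.2 - a.2) - t2 * (b.2 - a.2)) ^+ 2 by rewrite /sqdist; ring.
  by rewrite e1 e2 !subrr expr0n addr0.
by move/eqP; rewrite mulf_eq0 (gt_eqF hab) orbF sqrf_eq0 subr_eq0 => /eqP.
Qed.

End SegmentPoints.

(* Pigeonhole: an injective sequence cannot stay inside the range of a map
   defined on a finite type. *)
Lemma injective_escapes_range (X : eqType) (F : finType) (P : F -> X)
    (g : nat -> X) :
  injective g -> exists k, forall w, g k != P w.
Proof.
move=> g_inj; set s := map g (iota 0 #|F|.+1).
have s_uniq : uniq s by rewrite map_inj_uniq ?iota_uniq.
case: (boolP (all (mem (codom P)) s)) => [/allP s_sub|].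
  by have := uniq_leq_size s_uniq s_sub; rewrite size_map size_iota size_codom ltnn.
rewrite -has_predC => /hasP [_ /mapP [k _ ->]] /= hk.
by exists k => w; apply: contra hk => /eqP ->; exact: codom_f.
Qed.

Lemma fresh_point_near_midpoint (R : rcfType) (F : finType) (P : F -> point R)
    (a b : point R) (r : R) :
  0 < sqdist a b -> 0 < r ->
  exists2 s, 0 < s <= r & forall w, seg a b (2^-1 + s) != P w.
Proof.
move=> hab hr; pose sk (k : nat) : R := r / k.+1%:R.
have sk_inj : injective sk.
  by move=> k1 k2 /(mulfI (lt0r_neq0 hr)) /invr_inj /eqP; rewrite eqr_nat => /eqP [].
have [k hk] : exists k, forall w, seg a b (2^-1 + sk k) != P w.
  by apply: injective_escapes_range => k1 k2 /(seg_inj hab) /addrI /sk_inj.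
exists (sk k) => //; rewrite divr_gt0 ?ltr0Sn //= ler_pdivrMr ?ltr0Sn //.
by rewrite ler_peMr ?(ltW hr) // ler1n.
Qed.

Theorem mainTheorem14 (R : rcfType) (n : nat) (z : 'I_n -> point R)
  (zBS : point R) (c : R) :
  (0 < n)%N -> injective z -> (forall i, z i != zBS) -> 0 < c ->
  forall T : FQST z zBS, isMFQST c T ->
  forall v : vtx n (nst T),
    dist (npos T (Some v)) (npos T (par T v)) <= Num.sqrt (2 * c / flow T v).
Proof.
move=> _ _ _ c_gt0 T T_min v; have f_gt0 := flow_pos v.
rewrite /dist; apply: ler_wsqrtr; rewrite ler_pdivlMr // leNgt; apply/negP.
set D := sqdist _ _; set f := flow T v in f_gt0 * => long.
(* The edge is long: q := f D > 2c, so in particular it is nondegenerate. *)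
have D_gt0 : 0 < D.
  by have := sqdist_ge0 (npos T (Some v)) (npos T (par T v)); rewrite -/D; nra.
pose q := D * f; pose r := (q - 2 * c) / (4 * q).
have q_gt0 : 0 < q by rewrite mulr_gt0.
have r_def : r * (4 * q) = q - 2 * c by rewrite mulfVK // mulf_neq0 // gt_eqF.
have r_gt0 : 0 < r by rewrite divr_gt0 ?mulr_gt0 // subr_gt0.
have [s /andP [s_gt0 s_le] fresh] := fresh_point_near_midpoint (npos T) D_gt0 r_gt0.
(* Subdividing the edge at parameter 1/2 + s would strictly decrease L_c. *)
have := T_min (@subdivide _ _ _ _ T v _ fresh).
rewrite costLc_subdivide detour_seg -/D -/f -addrA lerDl.
apply/negP; rewrite -ltNge.
have -> : f * (- (2 * (2^-1 + s) * (1 - (2^-1 + s))) * D) = 2 * (q * s ^+ 2) - q / 2.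
  by rewrite /q; field.
have r_lt1 : r < 1 by nra.
have s2_lt : s ^+ 2 < r by nra.
nra.
Qed.
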